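(* For continuous functions defined using arithmetic circuits, the sequence of fixpoints along the path given by the linear homotopy $\mathcal{F}_t=(1-t)\mathcal{F}_0+t\mathcal{F}_1$ can have exponentially many alternations of the value of $t$: there are, for each $n$, continuous functions $\mathcal{F}_0,\mathcal{F}_1:[0,1]^3\to[0,1]^3$ computed by linear arithmetic circuits of size polynomial in $n$, with $\mathcal{F}_0$ having a unique fixpoint, such that along the path of fixpoints of $\mathcal{F}_t$ starting at the fixpoint of $\mathcal{F}_0$ (at $t=0$) and ending at a fixpoint of $\mathcal{F}_1$ (at $t=1$), the parameter $t$ changes direction a number of times exponential in $n$.
   Context: A linear arithmetic circuit computes a function $[0,1]^3\to[0,1]^3$ using gates whose inputs and outputs lie in $[0,1]$ (results truncated to $[0,1]$): sum, difference, max, min of two inputs, multiplication of an input by a constant, constants, and comparator gates (output $1$ if first input exceeds second, $0$ if smaller, arbitrary if equal). The path of fixpoints is a connected set of pairs $(x,t)$ with $\mathcal{F}_t(x)=x$. *)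

From HB Require Import structures.
From mathcomp Require Import all_boot all_order all_algebra.
From mathcomp Require Import all_classical all_reals all_analysis.
Set Implicit Arguments. Unset Strict Implicit. Unset Printing Implicit Defensive.
Import Order.TTheory GRing.Theory Num.Theory.
Import numFieldNormedType.Exports.
Local Open Scope classical_set_scope.
Local Open Scope ring_scope.

(* A circuit is a list of gates; gate number k may only refer to      *)
(* gates with index < k (checked by [circuit_wf]).                     *)
Inductive gate : Type :=
  | GIn    of 'I_3
  | GConst of rat
  | GAdd   of nat & nat
  | GSub   of nat & nat
  | GMax   of nat & nat
  | GMin   of nat & nat
  | GScale of rat & nat
  | GCmp   of nat & nat.

Record circuit := Circuit { gates : seq gate; outs : 'I_3 -> nat }.

Definition gate_refs_lt (k : nat) (g : gate) : bool :=
  match g with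
  | GIn _ | GConst _ => true
  | GAdd a b | GSub a b | GMax a b | GMin a b | GCmp a b => ((a < k) && (b < k))%N
  | GScale _ a => (a < k)%N
  end.

Definition circuit_wf (C : circuit) : Prop :=
  (forall k, (k < size (gates C))%N -> gate_refs_lt k (nth (GConst 0) (gates C) k))
  /\ (forall j : 'I_3, (outs C j < size (gates C))%N).

Definition rat_bitsize (q : rat) : nat :=
  (trunc_log 2 `|numq q|%N).+1 + (trunc_log 2 `|denq q|%N).+1.

Definition gate_size (g : gate) : nat :=
  match g with
  | GConst c | GScale c _ => 1 + rat_bitsize c
  | _ => 1
  end.

Definition circuit_size (C : circuit) : nat := \sum_(g <- gates C) gate_size g.

Section Semantics.
Variable R : realType.

Definition clamp01 (y : R) : R := Num.min 1 (Num.max 0 y).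

Definition in_cube (x : 'rV[R]_3) : Prop := forall i : 'I_3, 0 <= x ord0 i <= 1.
Definition cube : set 'rV[R]_3 := [set x | in_cube x].

Definition gate_ok (x : 'rV[R]_3) (v : nat -> R) (k : nat) (g : gate) : Prop :=
  match g with
  | GIn i => v k = x ord0 i
  | GConst c => v k = clamp01 (ratr c)
  | GAdd a b => v k = clamp01 (v a + v b)
  | GSub a b => v k = clamp01 (v a - v b)
  | GMax a b => v k = clamp01 (Num.max (v a) (v b))
  | GMin a b => v k = clamp01 (Num.min (v a) (v b))
  | GScale c a => v k = clamp01 (ratr c * v a)
  | GCmp a b => (v b < v a -> v k = 1) /\ (v a < v b -> v k = 0) /\ 0 <= v k <= 1
  end.

Definition valuation (C : circuit) (x : 'rV[R]_3) (v : nat -> R) : Prop :=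
  forall k, (k < size (gates C))%N -> gate_ok x v k (nth (GConst 0) (gates C) k).

Definition computes (C : circuit) (F : 'rV[R]_3 -> 'rV[R]_3) : Prop :=
  circuit_wf C /\
  forall x, in_cube x ->
    (exists v, valuation C x v) /\
    (forall v, valuation C x v -> forall j : 'I_3, v (outs C j) = F x ord0 j).

Definition homotopy (F0 F1 : 'rV[R]_3 -> 'rV[R]_3) (t : R) (x : 'rV[R]_3) :
  'rV[R]_3 := (1 - t) *: F0 x + t *: F1 x.

Definition is_fixpt_pair (F0 F1 : 'rV[R]_3 -> 'rV[R]_3) (p : 'rV[R]_3 * R) : Prop :=
  in_cube p.1 /\ 0 <= p.2 <= 1 /\ homotopy F0 F1 p.2 p.1 = p.1.

Definition fixpoint_path (F0 F1 : 'rV[R]_3 -> 'rV[R]_3) (x0 : 'rV[R]_3)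
    (gam : R -> 'rV[R]_3 * R) : Prop :=
  {within `[0, 1]%classic, continuous gam} /\
  (forall s, 0 <= s <= 1 -> is_fixpt_pair F0 F1 (gam s)) /\
  gam 0 = (x0, 0) /\ (gam 1).2 = 1.

Definition t_direction_changes_ge (gam : R -> 'rV[R]_3 * R) (K : nat) : Prop :=
  exists s : nat -> R,
    0 <= s 0%N /\ s K.+1 <= 1 /\
    (forall i, (i <= K)%N -> s i < s i.+1) /\
    (forall i, (i < K)%N ->
       ((gam (s i.+1)).2 - (gam (s i)).2) * ((gam (s i.+2)).2 - (gam (s i.+1)).2) < 0).

End Semantics.

(* The homotopy is F_t(a, b, c) = (clamp01(a + b - g a), t, 0) with
   g a = (a + T^N a) / 2, where T is the tent map and N = n + 2; each tent step
   costs three gates.  The fixpoints of F_t in the cube are the points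
   (a, g a, 0) with a < 1, together with the segment a = 1, t >= 1/2, so F_0
   has the single fixpoint 0.  As T^N maps the dyadic i / 2^N to [i odd],
   g (i / 2^N) = (i / 2^N + [i odd]) / 2.  A path of fixpoints from a = 0 to
   t = 1 must reach a = 1, so by the intermediate value theorem it passes the
   values a = i / 2^N in increasing order of time, and between consecutive
   ones t alternately rises and falls: 2^N - 2 changes of direction. *)

From HB Require Import structures.
From mathcomp Require Import all_boot all_order all_algebra.
From mathcomp Require Import all_classical all_reals all_analysis.
From mathcomp Require Import zify ring lra.
Import Order.TTheory GRing.Theory Num.Theory.
Import numFieldNormedType.Exports.
Local Open Scope classical_set_scope.
Local Open Scope ring_scope.
Set Implicit Arguments. Unset Strict Implicit.

Section Clamp01.
Variable R : realType.
Implicit Types y : R.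

Lemma clamp01_cases y :
  [\/ clamp01 y = y /\ 0 <= y <= 1, clamp01 y = 0 /\ y <= 0 | clamp01 y = 1 /\ 1 <= y].
Proof.
rewrite /clamp01; have [y0|y0] := leP 0 y; last first.
  by apply: Or32; rewrite (min_idPr ler01) (ltW y0).
have [y1|y1] := leP y 1; first by apply: Or31.
by apply: Or33; rewrite (ltW y1).
Qed.

Lemma clamp01_id y : 0 <= y <= 1 -> clamp01 y = y.
Proof. by move=> /andP[y0 y1]; rewrite /clamp01 (max_idPr y0) (min_idPr y1). Qed.

Lemma clamp01_le0 y : y <= 0 -> clamp01 y = 0.
Proof. by case: (clamp01_cases y) => -[-> ?] ?; lra. Qed.

Lemma clamp01_ge1 y : 1 <= y -> clamp01 y = 1.
Proof. by case: (clamp01_cases y) => -[-> ?] ?; lra. Qed.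

Lemma clamp01_double y : clamp01 (clamp01 y + clamp01 y) = clamp01 (y + y).
Proof.
case: (clamp01_cases y) => -[-> y01] //.
  by rewrite addr0 !clamp01_le0 //; lra.
by rewrite !clamp01_ge1 //; lra.
Qed.

End Clamp01.

Section PointwiseContinuity.
Variables (R : realType) (T : topologicalType).
Implicit Types f g : T -> R.

Lemma continuous_addf f g : continuous f -> continuous g -> continuous (fun y => f y + g y).
Proof. by move=> cf cg y; exact: continuousD (cf y) (cg y). Qed.

Lemma continuous_subf f g : continuous f -> continuous g -> continuous (fun y => f y - g y).
Proof. by move=> cf cg y; exact: continuousB (cf y) (cg y). Qed.

Lemma continuous_mulf f g : continuous f -> continuous g -> continuous (fun y => f y * g y).
Proof. by move=> cf cg y; exact: continuousM (cf y) (cg y). Qed.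

Lemma continuous_minf f g :
  continuous f -> continuous g -> continuous (fun y => Num.min (f y) (g y)).
Proof. by move=> cf cg y; exact: continuous_min (cf y) (cg y). Qed.

Lemma continuous_maxf f g :
  continuous f -> continuous g -> continuous (fun y => Num.max (f y) (g y)).
Proof. by move=> cf cg y; exact: continuous_max (cf y) (cg y). Qed.

Lemma continuous_clamp01 f : continuous f -> continuous (fun y => clamp01 (f y)).
Proof.
move=> cf; apply: continuous_minf; first exact: cst_continuous.
by apply: continuous_maxf; first exact: cst_continuous.
Qed.

End PointwiseContinuity.

Section CircuitEvaluation.
Variable R : realType.
Implicit Types (x : 'rV[R]_3) (vs : seq R) (g : gate) (gs : seq gate).

(* Comparator gates get the junk value [0]: [gate_value] is only meant for
   comparator-free circuits, which then have exactly one valuation. *)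
Definition gate_value x vs g : R :=
  match g with
  | GIn i => x ord0 i
  | GConst c => clamp01 (ratr c)
  | GAdd a b => clamp01 (nth 0 vs a + nth 0 vs b)
  | GSub a b => clamp01 (nth 0 vs a - nth 0 vs b)
  | GMax a b => clamp01 (Num.max (nth 0 vs a) (nth 0 vs b))
  | GMin a b => clamp01 (Num.min (nth 0 vs a) (nth 0 vs b))
  | GScale c a => clamp01 (ratr c * nth 0 vs a)
  | GCmp _ _ => 0
  end.

Definition gate_values x gs : seq R :=
  foldl (fun vs g => rcons vs (gate_value x vs g)) [::] gs.

Lemma gate_values_rcons x gs g :
  gate_values x (rcons gs g) =
  rcons (gate_values x gs) (gate_value x (gate_values x gs) g).
Proof. by rewrite /gate_values foldl_rcons. Qed.

Lemma size_gate_values x gs : size (gate_values x gs) = size gs.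
Proof.
elim/last_ind: gs => [//|gs g IH].
by rewrite gate_values_rcons !size_rcons IH.
Qed.

Lemma nth_gate_values_cat x gs1 gs2 k : (k < size gs1)%N ->
  nth 0 (gate_values x (gs1 ++ gs2)) k = nth 0 (gate_values x gs1) k.
Proof.
move=> hk; elim/last_ind: gs2 => [|gs2 g IH]; first by rewrite cats0.
rewrite -rcons_cat gate_values_rcons nth_rcons size_gate_values size_cat.
by rewrite ltn_addr.
Qed.

Lemma eq_gate_value x k vs1 vs2 g : gate_refs_lt k g ->
  (forall a, (a < k)%N -> nth 0 vs1 a = nth 0 vs2 a) ->
  gate_value x vs1 g = gate_value x vs2 g.
Proof.
by case: g => //= [a b|a b|a b|a b|c a] => [/andP[ha hb]|/andP[ha hb]|
  /andP[ha hb]|/andP[ha hb]|ha] e; rewrite !e.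
Qed.

Lemma nth_gate_values x gs k : (k < size gs)%N ->
  gate_refs_lt k (nth (GConst 0) gs k) ->
  nth 0 (gate_values x gs) k = gate_value x (gate_values x gs) (nth (GConst 0) gs k).
Proof.
move=> hk hr; rewrite -[in LHS](cat_take_drop k.+1 gs) nth_gate_values_cat; last first.
  by rewrite size_take; case: ifP.
rewrite (take_nth (GConst 0) hk) gate_values_rcons nth_rcons size_gate_values.
rewrite size_take hk ltnn eqxx; apply: (eq_gate_value _ hr) => a ha.
by rewrite -[in RHS](cat_take_drop k gs) nth_gate_values_cat // size_take hk.
Qed.

Definition comparator_free g : bool := if g is GCmp _ _ then false else true.

Section ComparatorFree.
Variables (C : circuit) (x : 'rV[R]_3).
Hypotheses (wfC : circuit_wf C) (freeC : all comparator_free (gates C)).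

Let values k := nth 0 (gate_values x (gates C)) k.

Let values_gate k : (k < size (gates C))%N ->
  values k = gate_value x (gate_values x (gates C)) (nth (GConst 0) (gates C) k).
Proof. by move=> hk; apply: nth_gate_values => //; exact: wfC.1. Qed.

Lemma valuation_gate_values : valuation C x values.
Proof.
move=> k hk; have := values_gate hk; have := all_nthP (GConst 0) freeC k hk.
by case: (nth (GConst 0) (gates C) k).
Qed.

Lemma valuation_unique v : valuation C x v ->
  forall k, (k < size (gates C))%N -> v k = values k.
Proof.
move=> hv; elim/ltn_ind => k IH hk.
have := hv k hk; have := values_gate hk; have := wfC.1 k hk.
have := all_nthP (GConst 0) freeC k hk.
by case: (nth (GConst 0) (gates C) k) => //= [i|c|a b|a b|a b|a b|c a] _ hr -> ->;
  rewrite ?IH //; lia.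
Qed.

End ComparatorFree.

Definition circuit_fun C x : 'rV[R]_3 :=
  \row_j nth 0 (gate_values x (gates C)) (outs C j).

Lemma computes_circuit_fun C : circuit_wf C -> all comparator_free (gates C) ->
  computes C (circuit_fun C).
Proof.
move=> wfC freeC; split => // x _; split.
  by eexists; exact: valuation_gate_values.
move=> v hv j; rewrite mxE; apply: valuation_unique => //.
exact: wfC.2.
Qed.

Lemma continuous_nth_gate_values gs k : continuous (fun x => nth 0 (gate_values x gs) k).
Proof.
elim/last_ind: gs k => [k|gs g IH k]; first by move=> x; exact: cst_continuous.
under eq_fun do rewrite gate_values_rcons nth_rcons size_gate_values.
case: ltnP => _; first exact: IH.
case: eqP => _; last by move=> x; exact: cst_continuous.
case: g => [i|c|a b|a b|a b|a b|c a|a b] /=; try exact: cst_continuous.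
- exact: coord_continuous.
- by apply/continuous_clamp01/continuous_addf.
- by apply/continuous_clamp01/continuous_subf.
- by apply/continuous_clamp01/continuous_maxf.
- by apply/continuous_clamp01/continuous_minf.
- by apply/continuous_clamp01/continuous_mulf => //; exact: cst_continuous.
Qed.

Lemma continuous_row3 (T : topologicalType) (h : 'I_3 -> T -> R) :
  (forall j, continuous (h j)) -> continuous (fun y => \row_j h j y : 'rV[R]_3).
Proof.
move=> ch.
have -> : (fun y => \row_j h j y : 'rV[R]_3) =
    fun y => \sum_(j < 3) h j y *: (delta_mx 0 j : 'rV[R]_3).
  apply/funext => y; apply/rowP => j; rewrite mxE summxE (bigD1 j) //= big1.
    by rewrite !mxE !eqxx mulr1 addr0.
  by move=> i /negbTE ij; rewrite !mxE eq_sym ij andbF mulr0.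
under eq_fun do rewrite !big_ord_recr big_ord0 /= add0r.
move=> y; pose u j := @continuousZr_tmp _ _ _ _ (delta_mx 0 j : 'rV[R]_3) _ (ch j y).
exact: continuousD (continuousD (u _) (u _)) (u _).
Qed.

Lemma continuous_circuit_fun C : continuous (circuit_fun C).
Proof. by apply: continuous_row3 => j; exact: continuous_nth_gate_values. Qed.

End CircuitEvaluation.

Section TentMap.
Variable R : realType.
Implicit Types (y : R) (N j : nat).

Definition tent y : R := 2 * Num.min y (1 - y).

Lemma tent_itv y : 0 <= y <= 1 -> 0 <= tent y <= 1.
Proof. by move=> /andP[? ?]; rewrite /tent minEle; case: ifP => ?; lra. Qed.

Lemma iter_tent_itv N y : 0 <= y <= 1 -> 0 <= iter N tent y <= 1.
Proof. by move=> y01; elim: N => //= N; exact: tent_itv. Qed.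

Lemma continuous_iter_tent N : continuous (iter N tent).
Proof.
have ctent : continuous tent.
  apply: continuous_mulf; first exact: cst_continuous.
  apply: continuous_minf => [y|]; first exact: cvg_id.
  by apply: continuous_subf => [|y]; [exact: cst_continuous|exact: cvg_id].
elim: N => [|N IH] y /=; first exact: cvg_id.
exact: continuous_comp (IH y) (ctent _).
Qed.

Definition dyadic N j : R := j%:R / (2 ^ N)%:R.

Lemma pow2_gt0 N : 0 < (2 ^ N)%:R :> R.
Proof. by rewrite ltr0n expn_gt0. Qed.

Lemma dyadic0 N : dyadic N 0 = 0.
Proof. by rewrite /dyadic mulr0n mul0r. Qed.

Lemma dyadic_ge0 N j : 0 <= dyadic N j.
Proof. by rewrite divr_ge0. Qed.

Lemma dyadic_lt1 N j : (j < 2 ^ N)%N -> dyadic N j < 1.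
Proof. by move=> hj; rewrite ltr_pdivrMr ?pow2_gt0 // mul1r ltr_nat. Qed.

Lemma dyadicS N j : dyadic N j.+1 = dyadic N j + (2 ^ N)%:R^-1.
Proof. by rewrite /dyadic -natr1 mulrDl mul1r. Qed.

(* The [N]-th iterate of the tent map folds [[0,1]] into [2^N] linear pieces,
   alternately rising from 0 to 1 and falling back. *)
Lemma iter_tent_dyadic N j : (j <= 2 ^ N)%N -> iter N tent (dyadic N j) = (odd j)%:R.
Proof.
elim: N j => [|N IH] j hj.
  by rewrite /dyadic expn0 divr1; move: hj; rewrite expn0; case: j => [|[|]].
rewrite iterSr.
have e : dyadic N.+1 j = dyadic N j / 2 by rewrite /dyadic expnS natrM; field.
have hP := pow2_gt0 N; rewrite e /tent; have [hjN|hjN] := leqP j (2 ^ N).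
  have : dyadic N j <= 1 by rewrite ler_pdivrMr // mul1r ler_nat.
  have := dyadic_ge0 N j => ? ?; rewrite (min_idPl _); last lra.
  by rewrite mulrC mulfVK ?IH.
have : 1 < dyadic N j by rewrite ltr_pdivlMr // mul1r ltr_nat.
move=> ?; rewrite (min_idPr _); last lra.
have hj' : (2 ^ N.+1 - j <= 2 ^ N)%N by rewrite expnS; lia.
rewrite (_ : 2 * (1 - dyadic N j / 2) = dyadic N (2 ^ N.+1 - j)).
  by rewrite IH // oddB // oddX /=; case: (odd j).
by rewrite /dyadic natrB // expnS natrM; field; exact: lt0r_neq0.
Qed.

Definition zigzag N y : R := (y + iter N tent y) / 2.

Lemma zigzag_dyadic N j : (j <= 2 ^ N)%N ->
  zigzag N (dyadic N j) = (dyadic N j + (odd j)%:R) / 2.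
Proof. by move=> hj; rewrite /zigzag iter_tent_dyadic. Qed.

Lemma zigzag0 N : zigzag N 0 = 0.
Proof. by have := @zigzag_dyadic N 0 (leq0n _); rewrite dyadic0 /= mulr0n addr0 mul0r. Qed.

Lemma zigzag1 N : (0 < N)%N -> zigzag N 1 = 2^-1.
Proof.
case: N => // N _; have := @zigzag_dyadic N.+1 _ (leqnn _).
by rewrite /dyadic divff ?lt0r_neq0 ?pow2_gt0 // oddX /= addr0 mul1r.
Qed.

Lemma zigzag_bounds N y : 0 <= y <= 1 -> y / 2 <= zigzag N y <= (y + 1) / 2.
Proof. by move=> y01; have := iter_tent_itv N y01; rewrite /zigzag => /andP[? ?]; lra. Qed.

Lemma continuous_zigzag N : continuous (zigzag N).
Proof.
apply: continuous_mulf; last exact: cst_continuous.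
by apply: continuous_addf => [y|]; [exact: cvg_id|exact: continuous_iter_tent].
Qed.

End TentMap.

Arguments dyadic {R} N j.
Arguments dyadic_lt1 {R} [N j].

Definition coord1 : 'I_3 := Ordinal (isT : (1 < 3)%N).
Definition coord2 : 'I_3 := Ordinal (isT : (2 < 3)%N).

Lemma ord3P (j : 'I_3) : [\/ j = ord0, j = coord1 | j = coord2].
Proof.
by case: j => -[|[|[|//]]] hj; [apply: Or31|apply: Or32|apply: Or33]; apply: val_inj.
Qed.

Definition gates_refs_lt (k0 : nat) (gs : seq gate) : Prop :=
  forall i, (i < size gs)%N -> gate_refs_lt (k0 + i) (nth (GConst 0) gs i).

Lemma gates_refs_lt_cat k0 gs1 gs2 :
  gates_refs_lt k0 gs1 -> gates_refs_lt (k0 + size gs1) gs2 -> gates_refs_lt k0 (gs1 ++ gs2).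
Proof.
move=> ok1 ok2 i; rewrite size_cat nth_cat => hi.
have [lt1|ge1] := ltnP i (size gs1); first exact: ok1.
by have := ok2 (i - size gs1)%N; rewrite -addnA subnKC //; apply; lia.
Qed.

(* Gate 4 copies the input [a], so that the [j]-th tent iterate of [a] will
   sit at gate [4 + 3 j]. *)
Definition input_gates : seq gate :=
  [:: GIn ord0; GIn coord1; GConst 1; GConst 0; GMax 0 0].

Definition tent_gates (k : nat) : seq gate :=
  [:: GSub 2 k; GMin k (k + 1); GAdd (k + 2) (k + 2)].

Fixpoint tent_chain (n : nat) : seq gate :=
  if n is m.+1 then tent_chain m ++ tent_gates (4 + 3 * m) else [::].

(* With [y] at gate [k], the last gate computes
   [2 clamp01((a + b)/2 - (a + y)/4) = clamp01(a + b - (a + y)/2)]; halving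
   first keeps every intermediate value inside [[0, 1]], away from truncation. *)
Definition output_gates (k : nat) : seq gate :=
  [:: GScale (2%:R^-1) 0; GScale (2%:R^-1) 1; GAdd (k + 1) (k + 2);
      GScale (4%:R^-1) 0; GScale (4%:R^-1) k; GAdd (k + 4) (k + 5);
      GSub (k + 3) (k + 6); GAdd (k + 7) (k + 7)].

Definition zigzag_gates (n : nat) : seq gate :=
  input_gates ++ tent_chain n ++ output_gates (4 + 3 * n).

(* [zigzag_circuit n o] outputs [(clamp01(a + b - zigzag n a), v_o, 0)] where
   [v_o] is the value of gate [o]: gate 2 is the constant 1, gate 3 the constant 0. *)
Definition zigzag_circuit (n o : nat) : circuit :=
  Circuit (zigzag_gates n)
    (fun j => if j == ord0 then (4 + 3 * n + 8)%N else if j == coord1 then o else 3%N).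

Lemma size_tent_chain n : size (tent_chain n) = (3 * n)%N.
Proof. by elim: n => //= n IH; rewrite size_cat IH /=; lia. Qed.

Lemma size_zigzag_gates n : size (zigzag_gates n) = (4 + 3 * n + 9)%N.
Proof. by rewrite !size_cat size_tent_chain /=; lia. Qed.

Lemma nth_zigzag_gates_input n k : (k < 5)%N ->
  nth (GConst 0) (zigzag_gates n) k = nth (GConst 0) input_gates k.
Proof. by move=> hk; rewrite nth_cat /= hk. Qed.

Lemma nth_tent_chain n j i : (j < n)%N -> (i < 3)%N ->
  nth (GConst 0) (tent_chain n) (3 * j + i) = nth (GConst 0) (tent_gates (4 + 3 * j)) i.
Proof.
elim: n => // n IH hj hi /=; rewrite nth_cat size_tent_chain.
case: (ltnP j n) => hjn; first by rewrite ifT ?IH //; lia.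
have -> : j = n by lia.
by rewrite ifF; [congr nth; lia|lia].
Qed.

Lemma nth_zigzag_gates_tent n j i : (j < n)%N -> (i < 3)%N ->
  nth (GConst 0) (zigzag_gates n) (4 + 3 * j + i.+1) =
  nth (GConst 0) (tent_gates (4 + 3 * j)) i.
Proof.
move=> hj hi; rewrite nth_cat /= ifF; last lia.
rewrite nth_cat size_tent_chain ifT; last lia.
by rewrite -(nth_tent_chain hj hi); congr nth; lia.
Qed.

Lemma nth_zigzag_gates_output n i :
  nth (GConst 0) (zigzag_gates n) (4 + 3 * n + i.+1) =
  nth (GConst 0) (output_gates (4 + 3 * n)) i.
Proof.
rewrite nth_cat /= ifF; last lia.
by rewrite nth_cat size_tent_chain ifF; [congr nth|]; lia.
Qed.

Lemma gates_refs_lt_zigzag_gates n : gates_refs_lt 0 (zigzag_gates n).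
Proof.
apply: gates_refs_lt_cat; first by case=> [|[|[|[|[|]]]]].
apply: gates_refs_lt_cat => /=; last first.
  rewrite size_tent_chain.
  by case=> [|[|[|[|[|[|[|[|]]]]]]]] //= _; lia.
elim: n => // n IH; apply: gates_refs_lt_cat => // i.
by rewrite size_tent_chain; case: i => [|[|[|]]] //= _; lia.
Qed.

Lemma zigzag_circuit_wf n o : (o < 4 + 3 * n + 9)%N -> circuit_wf (zigzag_circuit n o).
Proof.
move=> ho; split => [k|j]; first exact: gates_refs_lt_zigzag_gates.
rewrite -[gates _]/(zigzag_gates n) size_zigzag_gates /=.
by case: ifP => _; [|case: ifP => _]; lia.
Qed.

Lemma zigzag_gates_comparator_free n : all comparator_free (zigzag_gates n).
Proof. by rewrite !all_cat /= andbT; elim: n => //= n IH; rewrite all_cat IH. Qed.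

Lemma zigzag_circuit_size n o : circuit_size (zigzag_circuit n o) = (3 * n + 31)%N.
Proof.
have chain : \sum_(g <- tent_chain n) gate_size g = (3 * n)%N.
  by elim: n => [|n IH]; rewrite ?big_nil //= big_cat IH !big_cons big_nil /=; lia.
rewrite /circuit_size /= !big_cat chain /= !big_cons big_nil /=.
have -> : rat_bitsize (2%:R^-1) = 3%N by vm_compute.
have -> : rat_bitsize (4%:R^-1) = 4%N by vm_compute.
have -> : rat_bitsize 1 = 2%N by vm_compute.
have -> : rat_bitsize 0 = 2%N by vm_compute.
lia.
Qed.

Section ZigzagValues.
Variables (R : realType) (n : nat) (x : 'rV[R]_3).
Hypothesis cube_x : in_cube x.

Let a := x ord0 ord0.
Let b := x ord0 coord1.
Let vals := gate_values x (zigzag_gates n).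
Local Notation v k := (nth 0 vals k%N).

Let a01 : 0 <= a <= 1. Proof. exact: cube_x. Qed.
Let b01 : 0 <= b <= 1. Proof. exact: cube_x. Qed.

Lemma value_gate k : (k < 4 + 3 * n + 9)%N ->
  v k = gate_value x vals (nth (GConst 0) (zigzag_gates n) k).
Proof.
rewrite -size_zigzag_gates => hk.
by apply: nth_gate_values => //; rewrite -[k]add0n; exact: gates_refs_lt_zigzag_gates.
Qed.

Lemma value_input k : (k < 5)%N -> v k = gate_value x vals (nth (GConst 0) input_gates k).
Proof. by move=> hk; rewrite value_gate ?nth_zigzag_gates_input //; lia. Qed.

Lemma value_const1 : v 2 = 1.
Proof. by rewrite value_input //= rmorph1 clamp01_id // lexx ler01. Qed.

Lemma value_const0 : v 3 = 0.
Proof. by rewrite value_input //= rmorph0 clamp01_id // lexx ler01. Qed.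

Lemma value_tent j : (j < n)%N -> 0 <= v (4 + 3 * j) <= 1 ->
  v (4 + 3 * j.+1) = tent (v (4 + 3 * j)).
Proof.
move=> hj y01; have := tent_itv y01; rewrite /tent.
move: y01 => /andP[y0 y1] /andP[t0 t1].
have gate i : (i < 3)%N ->
    v (4 + 3 * j + i.+1) = gate_value x vals (nth (GConst 0) (tent_gates (4 + 3 * j)) i).
  by move=> hi; rewrite value_gate ?nth_zigzag_gates_tent //; lia.
have v1 : v (4 + 3 * j + 1) = 1 - v (4 + 3 * j).
  by rewrite gate //= value_const1 clamp01_id //; apply/andP; split; lra.
have v2 : v (4 + 3 * j + 2) = Num.min (v (4 + 3 * j)) (1 - v (4 + 3 * j)).
  by rewrite gate //= v1 clamp01_id //; apply/andP; split; lra.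
rewrite (_ : (4 + 3 * j.+1 = 4 + 3 * j + 3)%N); last lia.
by rewrite gate //= v2 clamp01_id; [lra|apply/andP; split; lra].
Qed.

Lemma value_iter_tent j : (j <= n)%N -> v (4 + 3 * j) = iter j (@tent R) a.
Proof.
elim: j => [_|j IH hj]; first by rewrite value_input //= value_input //= maxxx clamp01_id.
by rewrite value_tent ?IH ?iter_tent_itv //; exact: ltnW.
Qed.

Lemma value_output : v (4 + 3 * n + 8) = clamp01 (a + b - zigzag n a).
Proof.
have gate i : (i < 8)%N ->
    v (4 + 3 * n + i.+1) = gate_value x vals (nth (GConst 0) (output_gates (4 + 3 * n)) i).
  by move=> hi; rewrite value_gate ?nth_zigzag_gates_output //; lia.
have ratr_inv (k : nat) : ratr (k%:R^-1) = k%:R^-1 :> R by rewrite fmorphV rmorph_nat.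
have va : v 0 = a by rewrite value_input.
have vb : v 1 = b by rewrite value_input.
have vy := value_iter_tent (leqnn n).
have := iter_tent_itv n a01; rewrite -vy.
move: a01 b01 => /andP[a0 a1] /andP[b0 b1] /andP[y0 y1].
have v1 : v (4 + 3 * n + 1) = a / 2.
  by rewrite gate //= ratr_inv va clamp01_id; [lra|apply/andP; split; lra].
have v2 : v (4 + 3 * n + 2) = b / 2.
  by rewrite gate //= ratr_inv vb clamp01_id; [lra|apply/andP; split; lra].
have v3 : v (4 + 3 * n + 3) = (a + b) / 2.
  by rewrite gate //= v1 v2 clamp01_id; [lra|apply/andP; split; lra].
have v4 : v (4 + 3 * n + 4) = a / 4.
  by rewrite gate //= ratr_inv va clamp01_id; [lra|apply/andP; split; lra].
have v5 : v (4 + 3 * n + 5) = v (4 + 3 * n) / 4.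
  by rewrite gate //= ratr_inv clamp01_id; [lra|apply/andP; split; lra].
have v6 : v (4 + 3 * n + 6) = (a + v (4 + 3 * n)) / 4.
  by rewrite gate //= v4 v5 clamp01_id; [lra|apply/andP; split; lra].
have v7 : v (4 + 3 * n + 7) = clamp01 ((a + b) / 2 - (a + v (4 + 3 * n)) / 4).
  by rewrite gate //= v3 v6.
rewrite gate //= v7 clamp01_double /zigzag -vy; congr clamp01; lra.
Qed.

End ZigzagValues.

Section ZigzagHomotopy.
Variables (R : realType) (N : nat).
Hypothesis N_gt0 : (0 < N)%N.
Implicit Types (x : 'rV[R]_3) (s t : R).

Definition zigzag_map0 : 'rV[R]_3 -> 'rV[R]_3 := circuit_fun (zigzag_circuit N 3).
Definition zigzag_map1 : 'rV[R]_3 -> 'rV[R]_3 := circuit_fun (zigzag_circuit N 2).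

Local Notation Ft := (homotopy zigzag_map0 zigzag_map1).

Lemma zigzag_homotopyE x t : in_cube x ->
  Ft t x = \row_j (if j == ord0
                   then clamp01 (x ord0 ord0 + x ord0 coord1 - zigzag N (x ord0 ord0))
                   else if j == coord1 then t else 0).
Proof.
move=> cube_x; apply/rowP => j; rewrite !mxE /=.
case: (ord3P j) => -> /=; rewrite ?value_output ?value_const0 ?value_const1 //; ring.
Qed.

Lemma zigzag_fixpointP x t : in_cube x -> Ft t x = x <->
  [/\ x ord0 coord1 = t, x ord0 coord2 = 0 &
      x ord0 ord0 = clamp01 (x ord0 ord0 + t - zigzag N (x ord0 ord0))].
Proof.
move=> cube_x; rewrite zigzag_homotopyE //.
have coord M j : M = x -> M ord0 j = x ord0 j by move->.
split => [e | [e1 e2 e0]].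
  have := coord _ coord1 e; have := coord _ coord2 e; have := coord _ ord0 e.
  by rewrite !mxE /= => /esym e0 /esym e2 /esym e1; split => //; rewrite -e1.
apply/rowP => j; rewrite mxE; case: (ord3P j) => -> /=.
- by rewrite e1 -e0.
- by rewrite -e1.
- by rewrite -e2.
Qed.

Lemma zigzag_fixpoint_param x t : in_cube x -> 0 <= t <= 1 -> Ft t x = x ->
  x ord0 ord0 < 1 -> t = zigzag N (x ord0 ord0).
Proof.
move=> cube_x /andP[t0 t1] /(zigzag_fixpointP _ cube_x)[_ _].
set a := x ord0 ord0; case: (clamp01_cases (a + t - zigzag N a)) => -[-> h] e a1.
- lra.
- by move: h; rewrite e zigzag0 => h; lra.
- lra.
Qed.

Lemma zigzag_map0_fixpoint x : in_cube x -> zigzag_map0 x = x <-> x = 0.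
Proof.
move=> cube_x.
have -> : zigzag_map0 x = Ft 0 x by rewrite /homotopy subr0 scale1r scale0r addr0.
rewrite zigzag_fixpointP //; split => [[e1 e2 e0]|->]; last first.
  by rewrite !mxE zigzag0 addr0 subr0 clamp01_id // lexx ler01.
have a01 : 0 <= x ord0 ord0 <= 1 by exact: cube_x.
have := zigzag_bounds N a01; move: e0 a01 => /[swap] /andP[a0 a1].
set a := x ord0 ord0; rewrite addr0 => e0 /andP[g0 g1].
have a0E : a = 0.
  by case: (clamp01_cases (a - zigzag N a)) e0 => -[-> h] e0 //; lra.
by apply/rowP => j; rewrite mxE; case: (ord3P j) => ->.
Qed.

(* On [[0, 1/2]] the path runs along the graph [t = zigzag N a] with [a = 2 s];
   on [[1/2, 1]] it climbs the segment [a = 1, 1/2 <= t <= 1].  Since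
   [zigzag N (2 s) >= s] exactly on the first half, the [max] glues both pieces. *)
Definition zigzag_path_a s : R := Num.min 1 (2 * s).
Definition zigzag_path_t s : R := Num.max (zigzag N (zigzag_path_a s)) s.
Definition zigzag_path_x s : 'rV[R]_3 :=
  \row_j (if j == ord0 then zigzag_path_a s else if j == coord1 then zigzag_path_t s else 0).
Definition zigzag_path s : 'rV[R]_3 * R := (zigzag_path_x s, zigzag_path_t s).

Lemma zigzag_path_cases s : 0 <= s <= 1 ->
  (s <= 2^-1 /\ zigzag_path_a s = 2 * s /\ zigzag_path_t s = zigzag N (2 * s)) \/
  (2^-1 < s /\ zigzag_path_a s = 1 /\ zigzag_path_t s = s).
Proof.
move=> /andP[s0 s1]; rewrite /zigzag_path_t /zigzag_path_a; have [hs|hs] := leP s 2^-1.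
  rewrite (min_idPr _); last lra.
  have s2 : 0 <= 2 * s <= 1 by apply/andP; split; lra.
  have /andP[gl _] := zigzag_bounds N s2.
  by left; rewrite (max_idPl _) //; lra.
rewrite (min_idPl _); last lra.
by right; rewrite zigzag1 // (max_idPr _) //; lra.
Qed.

Lemma continuous_zigzag_path : continuous zigzag_path.
Proof.
have ca : continuous zigzag_path_a.
  apply: continuous_minf; first exact: cst_continuous.
  by apply: continuous_mulf => [|y]; [exact: cst_continuous|exact: cvg_id].
have ct : continuous zigzag_path_t.
  apply: continuous_maxf => [y|y]; last exact: cvg_id.
  by apply: (continuous_comp (ca y)); exact: continuous_zigzag.
have cx : continuous zigzag_path_x.
  apply: (@continuous_row3 _ _ (fun j s => if j == ord0 then zigzag_path_a s
    else if j == coord1 then zigzag_path_t s else 0)) => j.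
  case: (j == ord0); first exact: ca.
  by case: (j == coord1); [exact: ct|exact: cst_continuous].
by move=> s; exact: (cvg_pair (cx s) (ct s)).
Qed.

Lemma zigzag_path_fixpt s : 0 <= s <= 1 ->
  is_fixpt_pair zigzag_map0 zigzag_map1 (zigzag_path s).
Proof.
move=> s01; have [s0 s1] := andP s01.
have [a01 t01] : 0 <= zigzag_path_a s <= 1 /\ 0 <= zigzag_path_t s <= 1.
  case: (zigzag_path_cases s01) => -[h [-> ->]]; last by split; apply/andP; split; lra.
  have s2 : 0 <= 2 * s <= 1 by apply/andP; split; lra.
  by have /andP[? ?] := zigzag_bounds N s2; split; apply/andP; split; lra.
have cube_p : in_cube (zigzag_path s).1.
  by move=> j; rewrite mxE; case: (ord3P j) => -> //=; rewrite lexx ler01.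
split => //; split => //; apply/zigzag_fixpointP => //; rewrite !mxE /=.
split => //; case: (zigzag_path_cases s01) => -[h [-> ->]].
  by rewrite addrK clamp01_id //; apply/andP; split; lra.
by rewrite zigzag1 // clamp01_ge1 //; lra.
Qed.

Lemma zigzag_path0 : zigzag_path 0 = (0, 0).
Proof.
have a0 : zigzag_path_a 0 = 0 by rewrite /zigzag_path_a mulr0 (min_idPr ler01).
have t0 : zigzag_path_t 0 = 0 by rewrite /zigzag_path_t a0 zigzag0 maxxx.
rewrite /zigzag_path t0; congr pair; apply/rowP => j; rewrite !mxE a0 t0.
by case: ifP => //; case: ifP.
Qed.

Lemma zigzag_path1 : (zigzag_path 1).2 = 1.
Proof.
case: (zigzag_path_cases (s := 1) ltac:(by rewrite lexx ler01)) => -[h [_ t1]] //=.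
lra.
Qed.

Lemma zigzag_path_fixpoint_path : fixpoint_path zigzag_map0 zigzag_map1 0 zigzag_path.
Proof.
split; first exact: continuous_subspaceT continuous_zigzag_path.
by split; [exact: zigzag_path_fixpt | split; [exact: zigzag_path0 | exact: zigzag_path1]].
Qed.

Section Alternation.
Variable gam : R -> 'rV[R]_3 * R.
Hypothesis path_gam : fixpoint_path zigzag_map0 zigzag_map1 0 gam.

Let a s := (gam s).1 ord0 ord0.
Let t s := (gam s).2.

Lemma path_param s : 0 <= s <= 1 -> 0 <= a s <= 1 /\ (a s < 1 -> t s = zigzag N (a s)).
Proof.
move=> s01; have [cube_s [t01 fix_s]] := path_gam.2.1 s s01.
by split; [exact: cube_s|exact: zigzag_fixpoint_param].
Qed.

Lemma path_a0 : a 0 = 0.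
Proof. by rewrite /a path_gam.2.2.1 mxE. Qed.

(* At [s = 1] we have [t = 1], whereas [t = zigzag N a <= (a + 1) / 2 < 1]
   on the part [a < 1] of the fixpoint set. *)
Lemma path_a1 : a 1 = 1.
Proof.
have [a01 ta] := @path_param 1 ltac:(by rewrite lexx ler01).
have /andP[_ a1] := a01; have [a_lt1|] := ltP (a 1) 1; last by move=> ?; lra.
have := ta a_lt1; rewrite /t path_gam.2.2.2 => e.
have /andP[_ g1] := zigzag_bounds N a01; lra.
Qed.

Lemma path_a_continuous c : 0 <= c -> {within `[c, 1], continuous a}.
Proof.
move=> c0; have sub : `[c, 1]%classic `<=` `[0, 1]%classic.
  by move=> z /=; rewrite !in_itv /= => /andP[cz ->]; rewrite (le_trans c0 cz).
have coordC : continuous (fun p : 'rV[R]_3 * R => p.1 ord0 ord0).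
  move=> p; apply: (@continuous_comp _ _ _ fst (fun M : 'rV[R]_3 => M ord0 ord0)).
    exact: cvg_fst.
  exact: coord_continuous.
have gamC : {within `[c, 1], continuous gam} := continuous_subspaceW sub path_gam.1.
have -> : a = (fun p : 'rV[R]_3 * R => p.1 ord0 ord0) \o gam by [].
by move=> z; exact: continuous_comp (gamC z) (coordC _).
Qed.

(* The intermediate value theorem on [[s_M, 1]], where [a] runs from
   [M / 2^N] to 1, provides the next time [s_(M+1)]. *)
Lemma path_hits_dyadics M : (M < 2 ^ N)%N -> exists s : nat -> R,
  (forall i, (i <= M)%N -> 0 <= s i <= 1 /\ a (s i) = dyadic N i) /\
  (forall i, (i < M)%N -> s i < s i.+1).
Proof.
elim: M => [_|M IH hM].
  exists (fun=> 0); split => // i; rewrite leqn0 => /eqP ->.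
  by rewrite lexx ler01 path_a0 dyadic0.
have [s [hs hinc]] := IH (ltnW hM).
have [/andP[sM0 sM1] asM] := hs M (leqnn M).
have dM1 : dyadic N M.+1 < 1 :> R := dyadic_lt1 hM.
have dM : dyadic N M < dyadic N M.+1 :> R.
  by rewrite dyadicS ltrDl invr_gt0 pow2_gt0.
have [c' c'_in ac'] : exists2 c', c' \in `[s M, 1] & a c' = dyadic N M.+1.
  apply: IVT => //; first exact: path_a_continuous.
  by rewrite asM path_a1 (min_idPl (ltW (lt_trans dM dM1))) (max_idPr (ltW (lt_trans dM dM1)))
     (ltW dM) (ltW dM1).
move: c'_in; rewrite in_itv /= => /andP[sMc c'1].
have sM_lt : s M < c'.
  by rewrite lt_neqAle sMc andbT; apply: contraTneq dM => e; rewrite -asM -ac' e ltxx.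
exists (fun i => if i == M.+1 then c' else s i); split => [i|i hi].
  rewrite leq_eqVlt; case: eqP => [-> _|_ /= hi]; last exact: hs.
  by rewrite ac' c'1 (le_trans sM0 (ltW sM_lt)).
have [hiM|hiM] := ltnP i M; first by rewrite !ifF ?hinc //; apply/eqP; lia.
have -> : i = M by lia.
by rewrite eqxx ifF //; apply/eqP; lia.
Qed.

(* At the [i]-th visit [t = (i / 2^N + [i odd]) / 2], so consecutive increments
   of [t] are [(2^-N + 1) / 2] and [(2^-N - 1) / 2] in alternation. *)
Lemma path_direction_changes : t_direction_changes_ge gam (2 ^ N - 2).
Proof.
have N2 : (2 <= 2 ^ N)%N by rewrite -{1}(expn1 2) leq_exp2l.
have [s [hs hinc]] := @path_hits_dyadics (2 ^ N - 1) ltac:(lia).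
exists s; split; first by have [/andP[]] := hs 0%N (leq0n _).
split; first by have [/andP[]] := hs (2 ^ N - 2).+1 ltac:(lia).
split => [i hi|i hi]; first by apply: hinc; lia.
have tE j : (j <= 2 ^ N - 1)%N -> t (s j) = (dyadic N j + (odd j)%:R) / 2.
  move=> hj; have [s01 asj] := hs j hj; have [_ ta] := path_param s01.
  by rewrite ta asj ?zigzag_dyadic ?dyadic_lt1 //; lia.
rewrite -/(t _) -/(t _) -/(t _) !tE; try lia.
rewrite !dyadicS /=; set d := (2 ^ N)%:R^-1 : R.
have d1 : d < 1 by rewrite invf_lt1 ?pow2_gt0 // ltr1n; lia.
have d0 : 0 < d by rewrite invr_gt0 pow2_gt0.
have dd : d * d < 1 by nra.
by case: (odd i) => /=; rewrite [X in X < 0](_ : _ = (d * d - 1) / 4); try field; lra.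
Qed.

End Alternation.

End ZigzagHomotopy.

Arguments zigzag_map0 {R} N.
Arguments zigzag_map1 {R} N.

Theorem theorem8 (R : realType) :
  exists a b d : nat, (0 < d)%N /\
  forall n : nat,
  exists (C0 C1 : circuit) (F0 F1 : 'rV[R]_3 -> 'rV[R]_3),
    (circuit_size C0 <= a * n ^ b + a)%N /\
    (circuit_size C1 <= a * n ^ b + a)%N /\
    computes C0 F0 /\ computes C1 F1 /\
    {within @cube R, continuous F0} /\ {within @cube R, continuous F1} /\
    exists x0 : 'rV[R]_3,
      (in_cube x0 /\ F0 x0 = x0 /\ forall y, in_cube y -> F0 y = y -> y = x0) /\
      (exists gam, fixpoint_path F0 F1 x0 gam) /\
      (forall gam, fixpoint_path F0 F1 x0 gam ->
         exists K : nat, (2 ^ (n %/ d) <= K)%N /\ t_direction_changes_ge gam K).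
Proof.
exists 40%N, 1%N, 1%N; split => // n.
have wf o : (o < 4)%N -> circuit_wf (zigzag_circuit n.+2 o).
  by move=> o4; apply: zigzag_circuit_wf; lia.
exists (zigzag_circuit n.+2 3), (zigzag_circuit n.+2 2).
exists (zigzag_map0 n.+2), (zigzag_map1 n.+2).
split; first by rewrite zigzag_circuit_size; lia.
split; first by rewrite zigzag_circuit_size; lia.
do 2 (split; first exact: computes_circuit_fun (wf _ _) (zigzag_gates_comparator_free _)).
do 2 (split; first by apply: continuous_subspaceT; exact: continuous_circuit_fun).
have cube0 : in_cube (0 : 'rV[R]_3) by move=> j; rewrite mxE lexx ler01.
exists 0; split.
  split => //; split; first exact/(zigzag_map0_fixpoint _ cube0).
  by move=> y cube_y /(zigzag_map0_fixpoint _ cube_y).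
split; first by exists (zigzag_path n.+2); exact: zigzag_path_fixpoint_path.
move=> gam path_gam; exists (2 ^ n.+2 - 2)%N; split; last exact: path_direction_changes.
by rewrite divn1 !expnS; have := expn_gt0 2 n; lia.
Qed.
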